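(* Let $N\ge1$ and $W=W_N:=1+\sum_{n=1}^N\frac{P_{n-1}(y)}{x^n}\in A$. Then there are polynomials $u(y),v(y),\dots$ such that \[ W-1-\frac{y}{x}+\frac{1}{x}W+W_x+\frac{1}{x}W_y-\frac{1}{x}\log W=-\frac{P_N(y)}{x^{N+1}}+\frac{u(y)}{x^{N+2}}+\frac{v(y)}{x^{N+3}}+\cdots \]
   Context: Let $A$ be the ring of formal series $a=\sum_{n=0}^\infty \frac{q_n(y)}{x^n}$, each $q_n$ a complex polynomial of degree at most $n$, with the obvious ring operations and the $x^{-1}$-adic topology. Formal derivatives: $a_x=-\sum_{n\ge1}\frac{n q_n(y)}{x^{n+1}}$, $a_y=\sum_{n\ge1}\frac{q_n'(y)}{x^n}$. For $1+u\in A$ with $u$ having zero constant term, $\log(1+u)=\sum_{k\ge1}(-1)^{k+1}u^k/k$. Let $V$ be the unique solution in $A$ of $V=1+\frac{y}{x}-\frac{1}{x}V-V_x-\frac{1}{x}V_y+\frac{1}{x}\log V$, and define the polynomials $P_{n-1}$ ($n\ge1$) by $V=1+\sum_{n=1}^\infty\frac{P_{n-1}(y)}{x^n}$. *)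

From HB Require Import structures.
From mathcomp Require Import all_boot all_order all_algebra.
From mathcomp Require Import complex.
From mathcomp Require Import Rstruct.
Set Implicit Arguments. Unset Strict Implicit. Unset Printing Implicit Defensive.
Import Order.TTheory GRing.Theory Num.Theory.
Local Open Scope ring_scope.

Definition Cplx : fieldType := (Rdefinitions.R)[i].

(* A formal series  sum_n q_n(y) / x^n  is represented by its coefficient
   sequence n |-> q_n. *)
Definition ser := nat -> {poly Cplx}.

(* membership in the ring A : deg q_n <= n *)
Definition inA (a : ser) : Prop := forall n, (size (a n) <= n.+1)%N.

Definition sone : ser := fun n => if n is 0 then 1 else 0.
Definition sadd (a b : ser) : ser := fun n => a n + b n.
Definition sopp (a : ser) : ser := fun n => - a n.
Definition ssub (a b : ser) : ser := fun n => a n - b n.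
Definition smul (a b : ser) : ser :=
  fun n => \sum_(i < n.+1) a i * b (n - i)%N.
Definition spow (a : ser) (k : nat) : ser := iter k (smul a) sone.
Definition sdivx (a : ser) : ser := fun n => if n is m.+1 then a m else 0.
Definition y_over_x : ser := fun n => if n == 1%N then 'X else 0.
(* a_x = - sum_{n>=1} n q_n / x^{n+1} *)
Definition sdx (a : ser) : ser := fun n => if n is m.+1 then - (a m *+ m) else 0.
Definition sdy (a : ser) : ser := fun n => (a n)^`().
(* log(1+u) = sum_{k>=1} (-1)^{k+1} u^k / k, with u = a - 1 (zero constant
   term); since u^k has no terms below x^{-k}, the n-th coefficient is the
   finite sum over 1 <= k <= n. *)
Definition slog (a : ser) : ser :=
  fun n => \sum_(1 <= k < n.+1)
             (((-1) ^+ k.+1 / k%:R : Cplx) *: spow (ssub a sone) k n).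

(* The right-hand side operator of the defining equation of V:
   1 + y/x - V/x - V_x - V_y/x + log(V)/x *)
Definition Vrhs (V : ser) : ser :=
  ssub (ssub (ssub (sadd (sadd sone y_over_x) (sdivx (slog V)))
                   (sdivx V)) (sdx V)) (sdivx (sdy V)).

Definition Wexpr (W : ser) : ser :=
  ssub (sadd (sadd (sadd (ssub (ssub W sone) y_over_x) (sdivx W)) (sdx W))
             (sdivx (sdy W))) (sdivx (slog W)).

(* P_{n-1} is the coefficient of x^{-n} in V *)
Definition Pcoef (V : ser) (k : nat) : {poly Cplx} := V k.+1.

Definition Wtrunc (V : ser) (N : nat) : ser :=
  fun n => if n == 0%N then 1 else if (n <= N)%N then Pcoef V n.-1 else 0.

From mathcomp Require Import all_boot all_order all_algebra.
From mathcomp Require Import ring.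
Set Implicit Arguments. Unset Strict Implicit. Unset Printing Implicit Defensive.
Import GRing.Theory.
Local Open Scope ring_scope.

(* Idea: [Wexpr W = W - Vrhs W], and the coefficient of [x^-n] in [Vrhs W]
   only involves the coefficients of [W] below [x^-n], since every ingredient
   of [Vrhs] acts coefficientwise, as a Cauchy product, or carries a factor
   [1/x].  As [W_N] agrees with [V] up to [x^-N], [Vrhs W_N] agrees with
   [Vrhs V = V] up to [x^-(N+1)], so [Wexpr W_N] is [W_N - V] there: zero up to
   [x^-N], and [0 - P_N] at [x^-(N+1)]. *)

Definition eq_upto (m : nat) (a b : ser) := forall i, (i < m)%N -> a i = b i.

Section EqUpto.

Variable m : nat.

Lemma eq_upto_refl a : eq_upto m a a.
Proof. by []. Qed.

Lemma eq_upto_sadd a a' b b' :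
  eq_upto m a a' -> eq_upto m b b' -> eq_upto m (sadd a b) (sadd a' b').
Proof. by move=> ha hb n hn; rewrite /sadd ha ?hb. Qed.

Lemma eq_upto_ssub a a' b b' :
  eq_upto m a a' -> eq_upto m b b' -> eq_upto m (ssub a b) (ssub a' b').
Proof. by move=> ha hb n hn; rewrite /ssub ha ?hb. Qed.

Lemma eq_upto_smul a a' b b' :
  eq_upto m a a' -> eq_upto m b b' -> eq_upto m (smul a b) (smul a' b').
Proof.
move=> ha hb n hn; apply: eq_bigr => i _.
rewrite ha ?hb //; last exact: leq_ltn_trans (leq_ord i) hn.
exact: leq_ltn_trans (leq_subr _ _) hn.
Qed.

Lemma eq_upto_spow a b k : eq_upto m a b -> eq_upto m (spow a k) (spow b k).
Proof. by move=> h; elim: k => [|k IHk] //=; apply: eq_upto_smul. Qed.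

Lemma eq_upto_slog a b : eq_upto m a b -> eq_upto m (slog a) (slog b).
Proof.
move=> h n hn; apply: eq_bigr => k _.
by rewrite (eq_upto_spow k (eq_upto_ssub h (eq_upto_refl sone))).
Qed.

Lemma eq_upto_sdy a b : eq_upto m a b -> eq_upto m (sdy a) (sdy b).
Proof. by move=> h n hn; rewrite /sdy h. Qed.

Lemma eq_upto_sdivx a b : eq_upto m a b -> eq_upto m.+1 (sdivx a) (sdivx b).
Proof. by move=> h [|n] hn //=; rewrite h. Qed.

Lemma eq_upto_sdx a b : eq_upto m a b -> eq_upto m.+1 (sdx a) (sdx b).
Proof. by move=> h [|n] hn //=; rewrite h. Qed.

End EqUpto.

Lemma eq_upto_Vrhs m a b : eq_upto m a b -> eq_upto m.+1 (Vrhs a) (Vrhs b).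
Proof.
move=> h; rewrite /Vrhs.
apply: eq_upto_ssub; last exact/eq_upto_sdivx/eq_upto_sdy.
apply: eq_upto_ssub; last exact: eq_upto_sdx.
apply: eq_upto_ssub; last exact: eq_upto_sdivx.
apply: eq_upto_sadd; first exact: eq_upto_refl.
exact/eq_upto_sdivx/eq_upto_slog.
Qed.

Lemma WexprE a n : Wexpr a n = a n - Vrhs a n.
Proof. rewrite /Wexpr /Vrhs /ssub /sadd; ring. Qed.

Lemma Vrhs0 a : Vrhs a 0%N = 1.
Proof. by rewrite /Vrhs /ssub /sadd /= !subr0 !addr0. Qed.

Lemma eq_upto_Wtrunc V N : V 0%N = 1 -> eq_upto N.+1 (Wtrunc V N) V.
Proof. by move=> V0 [|i] //; rewrite ltnS /Wtrunc /= => ->. Qed.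

Theorem theorem4p3 (V : ser) (HA : inA V) (HV : V = Vrhs V) (N : nat) (HN : (1 <= N)%N) :
  (forall n, (n <= N)%N -> Wexpr (Wtrunc V N) n = 0) /\
  Wexpr (Wtrunc V N) N.+1 = - Pcoef V N.
Proof.
have V0 : V 0%N = 1 by rewrite HV Vrhs0.
have W_V := eq_upto_Wtrunc (N := N) V0.
have WexprW n : (n <= N.+1)%N -> Wexpr (Wtrunc V N) n = Wtrunc V N n - V n.
  by move=> hn; rewrite WexprE (eq_upto_Vrhs W_V) // -HV.
split=> [n hn|].
  by rewrite WexprW ?W_V ?subrr ?ltnS // leqW.
by rewrite WexprW // /Wtrunc /= ltnn sub0r.
Qed.
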